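(* If an $n$-agent network is $k$-redundant, then for any subset $\mathcal S\subset\mathcal V$ with $|\mathcal S|\ge n-k$, $$\arg\min_x\sum_{i\in\mathcal S}\|A_ix-b_i\|_2^2=\mathcal X^*.$$
   Context: An $n$-agent network: agents $\mathcal V=\{1,\dots,n\}$, each agent $i$ having real matrices $A_i\in\mathbb R^{r_i\times d}$, $b_i\in\mathbb R^{r_i}$; $\mathcal X^*=\arg\min_x\sum_{i=1}^n\|A_ix-b_i\|_2^2$ (the set of least squares solutions of $Ax=b$, $A,b$ the stackings of the $A_i,b_i$). The network is $k$-redundant ($k\in\{0,1,\dots,n-1\}$) if for any $\mathcal S_1,\mathcal S_2\subset\mathcal V$ with $|\mathcal S_1|=|\mathcal S_2|=n-k$, $\arg\min_x\sum_{i\in\mathcal S_1}\|A_ix-b_i\|_2^2=\arg\min_x\sum_{i\in\mathcal S_2}\|A_ix-b_i\|_2^2$. *)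

From HB Require Import structures.
From mathcomp Require Import all_boot all_order all_algebra.
Set Implicit Arguments. Unset Strict Implicit. Unset Printing Implicit Defensive.
Import Order.TTheory GRing.Theory Num.Theory.
Local Open Scope ring_scope.

Definition sqnorm (R : realFieldType) (m : nat) (v : 'cV[R]_m) : R :=
  \sum_(j < m) (v j 0) ^+ 2.

Definition lsq_cost (R : realFieldType) (n d : nat) (r : 'I_n -> nat)
  (A : forall i : 'I_n, 'M[R]_(r i, d)) (b : forall i : 'I_n, 'cV[R]_(r i))
  (S : {set 'I_n}) (x : 'cV[R]_d) : R :=
  \sum_(i in S) sqnorm (A i *m x - b i).

Definition lsq_argmin (R : realFieldType) (n d : nat) (r : 'I_n -> nat)
  (A : forall i : 'I_n, 'M[R]_(r i, d)) (b : forall i : 'I_n, 'cV[R]_(r i))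
  (S : {set 'I_n}) (x : 'cV[R]_d) : Prop :=
  forall y : 'cV[R]_d, lsq_cost A b S x <= lsq_cost A b S y.

Definition k_redundant (R : realFieldType) (n d : nat) (r : 'I_n -> nat)
  (A : forall i : 'I_n, 'M[R]_(r i, d)) (b : forall i : 'I_n, 'cV[R]_(r i))
  (k : nat) : Prop :=
  forall S1 S2 : {set 'I_n}, #|S1| = (n - k)%N -> #|S2| = (n - k)%N ->
    forall x : 'cV[R]_d, lsq_argmin A b S1 x <-> lsq_argmin A b S2 x.

From HB Require Import structures.
From mathcomp Require Import all_boot all_order all_algebra.
From mathcomp Require Import ring zify.
Set Implicit Arguments. Unset Strict Implicit. Unset Printing Implicit Defensive.
Import Order.TTheory GRing.Theory Num.Theory.
Local Open Scope ring_scope.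

(* Redundancy with k > 0 forces a minimizer x0 for one (n - k)-set of agents to
   minimize every (n - k)-set, i.e. to satisfy all their normal equations.  Two
   (n - k)-sets differing in a single agent then show that the agents' gradients
   at x0 all coincide, hence vanish: x0 minimizes each agent's cost on its own.
   Consequently the minimizers of any group S are exactly the points at which
   every cost in S is minimal, and for |S| >= n - k an (n - k)-subset of S
   together with redundancy transfers this to every single agent. *)

Section SquaredNorm.
Variable R : realFieldType.
Implicit Types (m : nat).

Lemma sqnormE m (v : 'cV[R]_m) : sqnorm v = (v^T *m v) 0 0.
Proof. by rewrite mxE; apply: eq_bigr => j _; rewrite !mxE expr2. Qed.

Lemma sqnorm_ge0 m (v : 'cV[R]_m) : 0 <= sqnorm v.
Proof. by apply: sumr_ge0 => j _; apply: sqr_ge0. Qed.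

Lemma sqnorm_eq0 m (v : 'cV[R]_m) : (sqnorm v == 0) = (v == 0).
Proof.
apply/idP/eqP => [|->]; last by rewrite /sqnorm big1 // => j _; rewrite mxE expr0n.
move=> /eqP/psumr_eq0P v0; apply/colP => j; rewrite mxE.
by apply/eqP; rewrite -sqrf_eq0; apply/eqP/v0 => // k _; apply: sqr_ge0.
Qed.

Lemma sqnormZ m (t : R) (v : 'cV[R]_m) : sqnorm (t *: v) = t ^+ 2 * sqnorm v.
Proof. by rewrite /sqnorm mulr_sumr; apply: eq_bigr => j _; rewrite mxE exprMn. Qed.

Lemma sqnormD m (u w : 'cV[R]_m) :
  sqnorm (u + w) = sqnorm u + 2 * (w^T *m u) 0 0 + sqnorm w.
Proof.
rewrite mxE /sqnorm mulr_sumr -!big_split /=; apply: eq_bigr => j _.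
by rewrite !mxE; ring.
Qed.

End SquaredNorm.

Lemma quadratic_ge0_linear_eq0 (R : realFieldType) (a q : R) :
  0 <= q -> (forall t, 0 <= a * t + q * t ^+ 2) -> a = 0.
Proof.
move=> q_ge0 /(_ (- a / (q + 1))).
have q1_gt0 : 0 < q + 1 by rewrite ltr_wpDl.
have -> : a * (- a / (q + 1)) + q * (- a / (q + 1)) ^+ 2 = - (a / (q + 1)) ^+ 2.
  by field; rewrite gt_eqF.
rewrite oppr_ge0 => sq_le0.
have /eqP : (a / (q + 1)) ^+ 2 = 0 by apply/eqP; rewrite eq_le sq_le0 sqr_ge0.
by rewrite sqrf_eq0 mulf_eq0 invr_eq0 (gt_eqF q1_gt0) orbF => /eqP.
Qed.

Section SubsetsOfGivenSize.
Variable I : finType.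

Lemma exists_subset_card (B : {set I}) m :
  (m <= #|B|)%N -> exists2 U : {set I}, U \subset B & #|U| = m.
Proof.
elim: m => [|m IHm] m_le; first by exists set0; rewrite ?sub0set ?cards0.
have [U sUB cardU] := IHm (ltnW m_le).
have /card_gt0P [z] : (0 < #|B :\: U|)%N.
  by rewrite cardsD (setIidPr sUB) cardU subn_gt0.
rewrite inE => /andP [zNU zB].
exists (z |: U); first by rewrite subUset sub1set zB sUB.
by rewrite cardsU1 zNU cardU.
Qed.

Lemma exists_card_set_mem (i : I) m :
  (0 < m <= #|I|)%N -> exists2 T : {set I}, i \in T & #|T| = m.
Proof.
case/andP=> m_gt0 m_le.
have [U sU cardU] : exists2 U : {set I}, U \subset [set~ i] & #|U| = m.-1.
  by apply: exists_subset_card; rewrite cardsC1; lia.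
have iNU : i \notin U by apply/negP => /(subsetP sU); rewrite !inE eqxx.
by exists (i |: U); rewrite ?setU11 // cardsU1 iNU cardU add1n prednK.
Qed.

(* The [m]-sets [i |: U] and [j |: U] differ in one element, so all [g i] coincide. *)
Lemma card_subset_sums_eq0 (R : numFieldType) (V : lmodType R) (g : I -> V) m :
    (0 < m < #|I|)%N -> (forall T : {set I}, #|T| = m -> \sum_(i in T) g i = 0) ->
  forall i, g i = 0.
Proof.
case/andP=> m_gt0 m_lt sums0.
have g_const i j : g i = g j.
  have [-> // | neq_ij] := eqVneq i j.
  have [U sU cardU] : exists2 U : {set I}, U \subset ~: [set i; j] & #|U| = m.-1.
    by apply: exists_subset_card; rewrite cardsCs setCK cards2 neq_ij; lia.
  have notinU l : l \in [set i; j] -> l \notin U.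
    by move=> l_ij; apply/negP => /(subsetP sU); rewrite inE l_ij.
  have sum_add l : l \in [set i; j] -> g l + \sum_(l' in U) g l' = 0.
    move=> l_ij; rewrite -big_setU1 ?notinU //=; apply: sums0.
    by rewrite cardsU1 notinU // cardU add1n prednK.
  by apply: (addIr (\sum_(l in U) g l)); rewrite !sum_add ?set21 ?set22.
move=> i; have [T iT cardT] : exists2 T : {set I}, i \in T & #|T| = m.
  by apply: exists_card_set_mem; rewrite m_gt0 ltnW.
move: (sums0 T cardT); rewrite (eq_bigr (fun=> g i)) => [|l _]; last exact: g_const.
rewrite sumr_const cardT -scaler_nat => /eqP.
by rewrite scaler_eq0 pnatr_eq0 (gtn_eqF m_gt0) => /eqP.
Qed.

Lemma card_subset_invariant_mem (X : Type) (Q : I -> X -> Prop) m :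
    (0 < m <= #|I|)%N ->
    (forall T1 T2 : {set I}, #|T1| = m -> #|T2| = m ->
       forall x, (forall i, i \in T1 -> Q i x) -> forall i, i \in T2 -> Q i x) ->
  forall S : {set I}, (m <= #|S|)%N ->
  forall x, (forall i, i \in S -> Q i x) -> forall i, Q i x.
Proof.
move=> m_bounds inv S m_le x QS i.
have [T sTS cardT] := exists_subset_card m_le.
have [T' iT' cardT'] := exists_card_set_mem i m_bounds.
by apply: (inv T T' cardT cardT') => // l lT; apply/QS/(subsetP sTS).
Qed.

End SubsetsOfGivenSize.

Lemma argmin_sum_common_minimizer (R : realDomainType) (I : finType) (X : Type)
    (f : I -> X -> R) (x0 : X) (S : {set I}) :
    (forall i y, f i x0 <= f i y) ->
  forall x, (forall y, \sum_(i in S) f i x <= \sum_(i in S) f i y) <->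
            (forall i, i \in S -> f i x = f i x0).
Proof.
move=> x0_min x; split=> [x_min | x_eq y]; last first.
  by rewrite (eq_bigr _ x_eq); apply: ler_sum => i _; apply: x0_min.
have /leif_sum sum_leif : forall i, i \in S -> f i x0 <= f i x ?= iff (f i x0 == f i x).
  by move=> i _; apply/leif_eq/x0_min.
have /forall_inP eq_x0 : [forall i in S, f i x0 == f i x].
  by rewrite -sum_leif eq_le sum_leif x_min.
by move=> i /eq_x0 /eqP.
Qed.

Section LeastSquares.
Variables (R : realFieldType) (n d : nat) (r : 'I_n -> nat).
Variables (A : forall i : 'I_n, 'M[R]_(r i, d)) (b : forall i : 'I_n, 'cV[R]_(r i)).
Implicit Types (T : {set 'I_n}) (x y h : 'cV[R]_d).

(* Half the gradient of [x |-> lsq_cost A b T x]. *)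
Definition lsq_grad T x := \sum_(i in T) (A i)^T *m (A i *m x - b i).

Definition gram T := \sum_(i in T) (A i)^T *m A i.

Lemma lsq_costD T x h :
  lsq_cost A b T (x + h) =
    lsq_cost A b T x + 2 * (h^T *m lsq_grad T x) 0 0 + \sum_(i in T) sqnorm (A i *m h).
Proof.
rewrite /lsq_cost /lsq_grad mulmx_sumr summxE mulr_sumr -!big_split /=.
apply: eq_bigr => i _.
have -> : A i *m (x + h) - b i = (A i *m x - b i) + A i *m h by rewrite mulmxDr addrAC.
by rewrite sqnormD trmx_mul mulmxA addrAC.
Qed.

Lemma lsq_argminP T x : lsq_argmin A b T x <-> lsq_grad T x = 0.
Proof.
split=> [x_min | grad0 y]; last first.
  rewrite -(subrK x y) addrC lsq_costD grad0 mulmx0 mxE mulr0 addr0 lerDl.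
  by apply: sumr_ge0 => i _; apply: sqnorm_ge0.
set g := lsq_grad T x; set q := \sum_(i in T) sqnorm (A i *m g).
suff /eqP : 2 * sqnorm g = 0 by rewrite mulf_eq0 pnatr_eq0 sqnorm_eq0 => /eqP.
apply: (@quadratic_ge0_linear_eq0 _ _ q) => [|t].
  by apply: sumr_ge0 => i _; apply: sqnorm_ge0.
have cross : 2 * ((t *: g)^T *m g) 0 0 = 2 * sqnorm g * t.
  by rewrite linearZ /= -scalemxAl mxE -sqnormE mulrA mulrAC.
have quad : \sum_(i in T) sqnorm (A i *m (t *: g)) = q * t ^+ 2.
  by rewrite /q mulr_suml; apply: eq_bigr => i _; rewrite -scalemxAr sqnormZ mulrC.
by have := x_min (x + t *: g); rewrite lsq_costD -addrA lerDl cross quad.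
Qed.

Lemma lsq_gradE T x : lsq_grad T x = gram T *m x - \sum_(i in T) (A i)^T *m b i.
Proof.
by rewrite /lsq_grad /gram mulmx_suml -sumrB; apply: eq_bigr => i _; rewrite mulmxBr mulmxA.
Qed.

Lemma trmx_gram T : (gram T)^T = gram T.
Proof. by rewrite /gram raddf_sum; apply: eq_bigr => i _ /=; rewrite trmx_mul trmxK. Qed.

Lemma gram_col_kernel T (w : 'cV[R]_d) :
  gram T *m w = 0 -> forall i, i \in T -> A i *m w = 0.
Proof.
move=> gram_w; have : \sum_(i in T) sqnorm (A i *m w) = 0.
  have := congr1 (fun v : 'cV_d => (w^T *m v) 0 0) gram_w.
  rewrite /= mulmx0 /gram mulmx_suml mulmx_sumr summxE [RHS]mxE => quad0.
  by rewrite -[RHS]quad0; apply: eq_bigr => i _; rewrite sqnormE trmx_mul !mulmxA.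
move/psumr_eq0P => Aw0 i iT; apply/eqP; rewrite -sqnorm_eq0.
by apply/eqP/Aw0 => // j _; apply: sqnorm_ge0.
Qed.

Lemma lsq_grad_root_exists T : exists x, lsq_grad T x = 0.
Proof.
set c := \sum_(i in T) (A i)^T *m b i.
have c_orth j : c^T *m col j (cokermx (gram T)) = 0.
  have /gram_col_kernel Aw0 : gram T *m col j (cokermx (gram T)) = 0.
    by rewrite colE mulmxA mulmx_coker mul0mx.
  rewrite /c raddf_sum /= mulmx_suml big1 // => i iT.
  by rewrite trmx_mul trmxK -mulmxA Aw0 ?mulmx0.
have /submxP [D cE] : (c^T <= gram T)%MS.
  rewrite submxE; apply/eqP/rowP => j.
  by move: (c_orth j); rewrite colE mulmxA -colE => /matrixP /(_ 0 0); rewrite !mxE.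
by exists D^T; rewrite lsq_gradE -[gram T]trmx_gram -trmx_mul -cE trmxK subrr.
Qed.

Lemma lsq_common_minimizer k : (0 < k)%N -> (k < n)%N -> k_redundant A b k ->
  exists x0, forall i y, sqnorm (A i *m x0 - b i) <= sqnorm (A i *m y - b i).
Proof.
move=> k_gt0 k_lt red.
have [T0 _ cardT0] : exists2 T0 : {set 'I_n}, T0 \subset setT & #|T0| = (n - k)%N.
  by apply: exists_subset_card; rewrite cardsT card_ord leq_subr.
have [x0 grad0_T0] := lsq_grad_root_exists T0.
have grad0 T : #|T| = (n - k)%N -> lsq_grad T x0 = 0.
  by move=> cardT; apply/lsq_argminP/(red T0 T cardT0 cardT)/lsq_argminP.
have grad0_agent i : (A i)^T *m (A i *m x0 - b i) = 0.
  by apply: (card_subset_sums_eq0 _ grad0); rewrite card_ord; lia.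
exists x0 => i y; have /lsq_argminP x0_min : lsq_grad [set i] x0 = 0.
  by rewrite /lsq_grad big_set1.
by have := x0_min y; rewrite /lsq_cost !big_set1.
Qed.

End LeastSquares.

Theorem corollary1 (R : realFieldType) (n d : nat) (r : 'I_n -> nat)
  (A : forall i : 'I_n, 'M[R]_(r i, d)) (b : forall i : 'I_n, 'cV[R]_(r i))
  (k : nat) (hk : (k < n)%N) :
  k_redundant A b k ->
  forall S : {set 'I_n}, (n - k <= #|S|)%N ->
    forall x : 'cV[R]_d, lsq_argmin A b S x <-> lsq_argmin A b setT x.
Proof.
move=> red S cardS x.
have [k0 | k_gt0] := posnP k.
  rewrite k0 subn0 in cardS; have -> // : S = setT.
  by apply/eqP; rewrite eqEcard subsetT cardsT card_ord.
have [x0 x0_min] := lsq_common_minimizer k_gt0 hk red.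
pose Q i y := sqnorm (A i *m y - b i) = sqnorm (A i *m x0 - b i).
have argminE T y : lsq_argmin A b T y <-> forall i, i \in T -> Q i y.
  exact: argmin_sum_common_minimizer.
rewrite !argminE; split=> [x_S i _ | x_all i _]; last exact: x_all.
move: i; apply: (card_subset_invariant_mem (Q := Q) _ _ cardS x_S).
  by rewrite card_ord leq_subr subn_gt0 hk.
by move=> T1 T2 card1 card2 y; rewrite -!argminE => /(red T1 T2 card1 card2).
Qed.
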